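(* Let $L$ be a positive integer, let $n_1,\dots,n_L$ be integers with $1\le n_i\le L$, and put $M=\sum_{i=1}^L n_i$. Let $\mathcal P$ be the set of vectors $\mathbf p=\frac1M\sum_{i=1}^L\mathbf e_i\in\mathbb R^L$ where each $\mathbf e_i\in\{0,1\}^L$ has exactly $n_i$ ones, and let $\mathrm{conv}(\mathcal P)$ be its convex hull. Let $\mathbf e_i^\star\in\{0,1\}^L$ be the vector whose first $n_i$ components are $1$ and remaining $L-n_i$ components are $0$, and set $\mathbf p^\star=\frac1M\sum_{i=1}^L\mathbf e_i^\star$. Then $\mathbf p^\star$ is a probability mass function on $[L]$ and $$H(\mathbf p^\star)=\min_{\mathbf p\in\mathcal P}H(\mathbf p)=\min_{\mathbf p\in\mathrm{conv}(\mathcal P)}H(\mathbf p);$$ moreover every minimizer of $H$ over $\mathrm{conv}(\mathcal P)$ is a permutation of (the components of) $\mathbf p^\star$.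
   Context: $H(\mathbf p)=-\sum_i\mathbf p(i)\log_2\mathbf p(i)$ is the Shannon entropy (with $0\log0=0$). In the paper, $L=2^{x+y}$, $M=3^{x+y}$ and the $n_i$ are the sizes of the classes of input triples with a given arithmetic sum, grouped by the value of the third input; $\mathbf p^\star$ is called the ''clumpy'' distribution. *)

From Stdlib Require Import Reals Lra List Permutation.
Open Scope R_scope.

Definition sumR (n : nat) (f : nat -> R) : R :=
  fold_right Rplus 0 (map f (seq 0 n)).

Definition log2 (x : R) : R := ln x / ln 2.

(* x log2 x with the convention 0 log 0 = 0 *)
Definition plog2 (x : R) : R := if Req_EM_T x 0 then 0 else x * log2 x.

(* Shannon entropy of a vector p in R^L (components p 0, ..., p (L-1)) *)
Definition entropy (L : nat) (p : nat -> R) : R := - sumR L (fun j => plog2 (p j)).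

Definition Msum (L : nat) (n : nat -> nat) : R := sumR L (fun i => INR (n i)).

(* p is in the set P: p = (1/M) sum_i e_i where e_i in {0,1}^L has exactly n_i ones
   (e_i is given as E i). Vectors are compared on components 0..L-1. *)
Definition inP (L : nat) (n : nat -> nat) (p : nat -> R) : Prop :=
  exists E : nat -> nat -> R,
    (forall i j, (i < L)%nat -> (j < L)%nat -> E i j = 0 \/ E i j = 1) /\
    (forall i, (i < L)%nat -> sumR L (fun j => E i j) = INR (n i)) /\
    (forall j, (j < L)%nat -> p j = / Msum L n * sumR L (fun i => E i j)).

Definition in_convP (L : nat) (n : nat -> nat) (p : nat -> R) : Prop :=
  exists (K : nat) (w : nat -> R) (q : nat -> nat -> R),
    (forall k, (k < K)%nat -> 0 <= w k /\ inP L n (q k)) /\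
    sumR K w = 1 /\
    (forall j, (j < L)%nat -> p j = sumR K (fun k => w k * q k j)).

Definition pstar (L : nat) (n : nat -> nat) (j : nat) : R :=
  / Msum L n * sumR L (fun i => if Nat.ltb j (n i) then 1 else 0).

Definition is_pmf (L : nat) (p : nat -> R) : Prop :=
  (forall j, (j < L)%nat -> 0 <= p j) /\ sumR L p = 1.

From Stdlib Require Import Reals Lra Lia List Permutation Sorted.
Open Scope R_scope.

(* Every point p of conv(P) is majorized by p*: any k coordinates of a point of P
   sum to at most (1/M) sum_i min(n_i, k), since e_i puts at most min(n_i, k) ones
   on them, and this is exactly the sum of the first k coordinates of p*.
   Let x be the nonincreasing rearrangement of p and y = p*.  Gibbs' inequality gives
   sum y ln y - sum y ln x >= sum y - sum x = 0, and Abel summation against the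
   nonincreasing weights ln x_t turns majorization into sum (y - x) ln x >= 0.
   Hence sum x ln x <= sum y ln y, and equality forces equality in every Gibbs term,
   i.e. x = y. *)

Definition lsum (l : list R) : R := fold_right Rplus 0 l.

Lemma lsum_app l1 l2 : lsum (l1 ++ l2) = lsum l1 + lsum l2.
Proof. induction l1 as [|a l1 IH]; simpl; [lra|]. unfold lsum in *; simpl; rewrite IH; lra. Qed.

Lemma lsum_perm l1 l2 : Permutation l1 l2 -> lsum l1 = lsum l2.
Proof. induction 1; unfold lsum in *; simpl; lra. Qed.

Lemma sumR_lsum n f : sumR n f = lsum (map f (seq 0 n)).
Proof. reflexivity. Qed.

Section MapSums.
Context {A : Type}.
Implicit Types (s : list A) (f g : A -> R).

Lemma lsum_map_ext s f g : (forall a, In a s -> f a = g a) ->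
  lsum (map f s) = lsum (map g s).
Proof. intros H; f_equal; apply map_ext_in; auto. Qed.

Lemma lsum_map_plus s f g :
  lsum (map (fun a => f a + g a) s) = lsum (map f s) + lsum (map g s).
Proof. induction s as [|a s IH]; unfold lsum in *; simpl; [lra|]. rewrite IH; lra. Qed.

Lemma lsum_map_minus s f g :
  lsum (map (fun a => f a - g a) s) = lsum (map f s) - lsum (map g s).
Proof. induction s as [|a s IH]; unfold lsum in *; simpl; [lra|]. rewrite IH; lra. Qed.

Lemma lsum_map_mult_l s c f :
  lsum (map (fun a => c * f a) s) = c * lsum (map f s).
Proof. induction s as [|a s IH]; unfold lsum in *; simpl; [lra|]. rewrite IH; lra. Qed.

Lemma lsum_map_const s c : lsum (map (fun _ => c) s) = INR (length s) * c.
Proof.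
  induction s as [|a s IH]; unfold lsum in *; cbn [map fold_right length]; [simpl; lra|].
  rewrite IH, S_INR; lra.
Qed.

Lemma lsum_map_le s f g : (forall a, In a s -> f a <= g a) ->
  lsum (map f s) <= lsum (map g s).
Proof.
  induction s as [|a s IH]; intros H; unfold lsum in *; simpl; [lra|].
  pose proof (H a (or_introl eq_refl)). pose proof (IH (fun b Hb => H b (or_intror Hb))). lra.
Qed.

Lemma lsum_map_nonneg s f : (forall a, In a s -> 0 <= f a) -> 0 <= lsum (map f s).
Proof.
  intros H. replace 0 with (lsum (map (fun _ => 0) s)).
  - apply lsum_map_le; auto.
  - rewrite lsum_map_const; lra.
Qed.

Lemma lsum_map_In_le s f a : (forall b, In b s -> 0 <= f b) -> In a s ->
  f a <= lsum (map f s).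
Proof.
  induction s as [|b s IH]; intros H Ha; [destruct Ha|].
  unfold lsum; simpl; fold (lsum (map f s)).
  pose proof (lsum_map_nonneg s f (fun c Hc => H c (or_intror Hc))).
  pose proof (H b (or_introl eq_refl)).
  destruct Ha as [<-|Ha]; [lra|].
  pose proof (IH (fun c Hc => H c (or_intror Hc)) Ha). lra.
Qed.

End MapSums.

Lemma lsum_map_comm {A B : Type} (s : list A) (t : list B) (F : A -> B -> R) :
  lsum (map (fun a => lsum (map (F a) t)) s) =
  lsum (map (fun b => lsum (map (fun a => F a b) s)) t).
Proof.
  induction s as [|a s IH]; unfold lsum at 1; simpl.
  - rewrite lsum_map_const; lra.
  - fold (lsum (map (fun a => lsum (map (F a) t)) s)). rewrite IH, <- lsum_map_plus. reflexivity.
Qed.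

Lemma sumR_S n f : sumR (S n) f = sumR n f + f n.
Proof. rewrite !sumR_lsum, seq_S, map_app, lsum_app. simpl. lra. Qed.

Lemma sumR_ext n f g : (forall j, (j < n)%nat -> f j = g j) -> sumR n f = sumR n g.
Proof. intros H; apply lsum_map_ext; intros j Hj; apply in_seq in Hj; apply H; lia. Qed.

Lemma sumR_le n f g : (forall j, (j < n)%nat -> f j <= g j) -> sumR n f <= sumR n g.
Proof. intros H; apply lsum_map_le; intros j Hj; apply in_seq in Hj; apply H; lia. Qed.

Lemma sumR_nonneg n f : (forall j, (j < n)%nat -> 0 <= f j) -> 0 <= sumR n f.
Proof. intros H; apply lsum_map_nonneg; intros j Hj; apply in_seq in Hj; apply H; lia. Qed.

Lemma sumR_minus n f g : sumR n (fun j => f j - g j) = sumR n f - sumR n g.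
Proof. apply lsum_map_minus. Qed.

Lemma sumR_mult_l n c f : sumR n (fun j => c * f j) = c * sumR n f.
Proof. apply lsum_map_mult_l. Qed.

Lemma sumR_comm n m (F : nat -> nat -> R) :
  sumR n (fun i => sumR m (F i)) = sumR m (fun j => sumR n (fun i => F i j)).
Proof. apply lsum_map_comm. Qed.

Lemma sumR_split k n f : (k <= n)%nat ->
  sumR n f = sumR k f + lsum (map f (seq k (n - k))).
Proof.
  intros H. unfold sumR. replace n with (k + (n - k))%nat at 1 by lia.
  rewrite seq_app, map_app. apply lsum_app.
Qed.

Lemma sumR_indicator_lt k m : sumR k (fun j => if Nat.ltb j m then 1 else 0) = INR (Nat.min m k).
Proof.
  induction k as [|k IH]; [rewrite Nat.min_0_r; reflexivity|].
  rewrite sumR_S, IH. destruct (Nat.ltb_spec k m).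
  - replace (Nat.min m (S k)) with (S (Nat.min m k)) by lia. rewrite S_INR; lra.
  - replace (Nat.min m (S k)) with (Nat.min m k) by lia. lra.
Qed.

Lemma sumR_nonneg_eq0 n f : (forall j, (j < n)%nat -> 0 <= f j) -> sumR n f <= 0 ->
  forall j, (j < n)%nat -> f j = 0.
Proof.
  intros H Hs j Hj.
  pose proof (lsum_map_In_le (seq 0 n) f j
    ltac:(intros a Ha; apply in_seq in Ha; apply H; lia) ltac:(apply in_seq; lia)).
  pose proof (H j Hj). rewrite sumR_lsum in Hs. lra.
Qed.

Lemma lsum_map_le_sumR (s : list nat) n f : NoDup s -> (forall j, In j s -> (j < n)%nat) ->
  (forall j, (j < n)%nat -> 0 <= f j) -> lsum (map f s) <= sumR n f.
Proof.
  intros Hnd Hs Hf.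
  set (rest := filter (fun j => if in_dec Nat.eq_dec j s then false else true) (seq 0 n)).
  assert (Hrest : forall j, In j rest <-> (j < n)%nat /\ ~ In j s).
  { intros j. unfold rest. rewrite filter_In, in_seq.
    destruct in_dec; split; intros H; intuition (try discriminate; lia). }
  assert (Hp : Permutation (s ++ rest) (seq 0 n)).
  { apply NoDup_Permutation.
    - apply NoDup_app; [auto| apply NoDup_filter, seq_NoDup |].
      intros j Hj Hr. apply Hrest in Hr. tauto.
    - apply seq_NoDup.
    - intros j. rewrite in_app_iff, Hrest, in_seq.
      destruct (in_dec Nat.eq_dec j s) as [Hj|Hj]; [pose proof (Hs j Hj)|]; intuition lia. }
  rewrite sumR_lsum, <- (lsum_perm _ _ (Permutation_map f Hp)), map_app, lsum_app.
  assert (0 <= lsum (map f rest)).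
  { apply lsum_map_nonneg. intros j Hj. apply Hrest in Hj. apply Hf; tauto. }
  lra.
Qed.

Lemma ln_lt_sub_1 u : 0 < u -> u <> 1 -> ln u < u - 1.
Proof.
  intros Hu Hne. pose proof (exp_ineq1 (ln u) (ln_neq_0 u Hne Hu)).
  rewrite exp_ln in H by lra. lra.
Qed.

Lemma ln_le_sub_1 u : 0 < u -> ln u <= u - 1.
Proof.
  intros Hu. destruct (Req_dec u 1) as [->|Hne]; [rewrite ln_1; lra|].
  left; apply ln_lt_sub_1; auto.
Qed.

Lemma ln_le x y : 0 < x -> x <= y -> ln x <= ln y.
Proof. intros Hx [Hxy|<-]; [left; apply ln_increasing|]; lra. Qed.

(* [y ln (x / y) <= y (x / y - 1)], strictly unless [x = y]. *)
Lemma gibbs_term x y : 0 <= x -> 0 <= y -> (x = 0 -> y = 0) ->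
  y - x <= y * ln y - y * ln x /\ (y * ln y - y * ln x = y - x -> x = y).
Proof.
  intros Hx Hy Hxy. destruct (Req_dec y 0) as [->|Hy0]; [split; lra|].
  assert (Hxp : 0 < x) by (destruct (Req_dec x 0) as [H0|H0]; [apply Hxy in H0|]; lra).
  assert (Hq : 0 < x / y) by (apply Rdiv_lt_0_compat; lra).
  assert (Hlog : ln x - ln y = ln (x / y)).
  { unfold Rdiv. rewrite ln_mult, ln_Rinv by (try apply Rinv_0_lt_compat; lra). ring. }
  assert (Hyq : y * (x / y - 1) = x - y) by (field; lra).
  split.
  - pose proof (Rmult_le_compat_l y _ _ Hy (ln_le_sub_1 _ Hq)). nra.
  - intros Heq. destruct (Req_dec (x / y) 1) as [H1|H1].
    + assert (x = y * (x / y)) by (field; lra). rewrite H1 in H. lra.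
    + pose proof (Rmult_lt_compat_l y _ _ ltac:(lra) (ln_lt_sub_1 _ Hq H1)). nra.
Qed.

Lemma abel_summation_le (d c : nat -> R) m :
  (forall k, (k < m)%nat -> 0 <= sumR (S k) d * (c k - c (S k))) ->
  sumR (S m) d * c m <= sumR (S m) (fun t => d t * c t).
Proof.
  induction m as [|m IH]; intros H.
  - unfold sumR; simpl. lra.
  - rewrite (sumR_S (S m) d), (sumR_S (S m) (fun t => d t * c t)).
    pose proof (IH (fun k Hk => H k ltac:(lia))). pose proof (H m ltac:(lia)). nra.
Qed.

Section Majorization.
Variables (L : nat) (x y : nat -> R).
Hypotheses (x_nonneg : forall t, (t < L)%nat -> 0 <= x t)
  (y_nonneg : forall t, (t < L)%nat -> 0 <= y t)
  (x_noninc : forall t, (S t < L)%nat -> x (S t) <= x t)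
  (x_sum : sumR L x = 1) (y_sum : sumR L y = 1)
  (x_majorized : forall k, (k <= L)%nat -> sumR k x <= sumR k y).

Lemma noninc_zero_tail k : x k = 0 -> forall u, (k <= u < L)%nat -> x u = 0.
Proof.
  intros H0 u Hu. induction u as [|u IH].
  - replace k with 0%nat in H0 by lia. auto.
  - destruct (Nat.eq_dec k (S u)) as [<-|Hne]; auto.
    pose proof (IH ltac:(lia)). pose proof (x_noninc u ltac:(lia)).
    pose proof (x_nonneg (S u) ltac:(lia)). lra.
Qed.

Lemma majorized_zero_prefix k : (k < L)%nat -> x k = 0 ->
  sumR k x = 1 /\ sumR k y = 1 /\ y k = 0.
Proof.
  intros Hk H0.
  assert (Hsx : sumR k x = 1).
  { assert (lsum (map x (seq k (L - k))) = 0).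
    { rewrite (lsum_map_ext _ x (fun _ => 0)), lsum_map_const; [lra|].
      intros j Hj. apply in_seq in Hj. apply (noninc_zero_tail k); auto; lia. }
    pose proof (sumR_split k L x ltac:(lia)). lra. }
  pose proof (x_majorized k ltac:(lia)).
  pose proof (sumR_split k L y ltac:(lia)).
  assert (Hy_tail : forall j, In j (seq k (L - k)) -> 0 <= y j)
    by (intros j Hj; apply in_seq in Hj; apply y_nonneg; lia).
  pose proof (lsum_map_nonneg _ y Hy_tail).
  pose proof (lsum_map_In_le _ y k Hy_tail ltac:(apply in_seq; lia)).
  pose proof (y_nonneg k Hk).
  repeat split; lra.
Qed.

Lemma majorized_support t : (t < L)%nat -> x t = 0 -> y t = 0.
Proof. intros Ht H0. apply (majorized_zero_prefix t Ht H0). Qed.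

Lemma majorized_sum_ln_nonneg : 0 <= sumR L (fun t => (y t - x t) * ln (x t)).
Proof.
  (* Where [x] vanishes, [ln (x t)] is a junk value; there the partial sums of
     [y - x] are already 0, so the Abel weights do not matter. *)
  destruct (Nat.eq_dec L 0) as [HL0|HL0]; [rewrite HL0; unfold sumR; simpl; lra|].
  pose proof (abel_summation_le (fun t => y t - x t) (fun t => ln (x t)) (pred L)) as Habel.
  replace (S (pred L)) with L in Habel by lia.
  rewrite sumR_minus, x_sum, y_sum, Rminus_diag, Rmult_0_l in Habel.
  apply Habel. intros k Hk. rewrite sumR_minus.
  destruct (Req_dec (x (S k)) 0) as [H0|H0].
  - destruct (majorized_zero_prefix (S k) ltac:(lia) H0) as [-> [-> _]]. lra.
  - pose proof (x_majorized (S k) ltac:(lia)).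
    assert (0 < x (S k)) by (pose proof (x_nonneg (S k) ltac:(lia)); lra).
    pose proof (ln_le _ _ ltac:(eassumption) (x_noninc k ltac:(lia))).
    apply Rmult_le_pos; lra.
Qed.

Lemma majorized_sum_xlnx :
  sumR L (fun t => x t * ln (x t)) <= sumR L (fun t => y t * ln (y t)) /\
  (sumR L (fun t => x t * ln (x t)) = sumR L (fun t => y t * ln (y t)) ->
   forall t, (t < L)%nat -> x t = y t).
Proof.
  set (gap := fun t => (y t * ln (y t) - y t * ln (x t)) - (y t - x t)).
  assert (Hgap : forall t, (t < L)%nat -> 0 <= gap t /\ (gap t = 0 -> x t = y t)).
  { intros t Ht. destruct (gibbs_term (x t) (y t) (x_nonneg t Ht) (y_nonneg t Ht)
      (majorized_support t Ht)) as [H1 H2].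
    unfold gap. split; [lra| intros; apply H2; lra]. }
  assert (Hsplit : sumR L gap = sumR L (fun t => y t * ln (y t)) - sumR L (fun t => x t * ln (x t))
                                - sumR L (fun t => (y t - x t) * ln (x t))).
  { unfold gap. rewrite !sumR_minus, x_sum, y_sum.
    rewrite (sumR_ext L (fun t => (y t - x t) * ln (x t))
               (fun t => y t * ln (x t) - x t * ln (x t))) by (intros; ring).
    rewrite sumR_minus. ring. }
  pose proof majorized_sum_ln_nonneg.
  pose proof (sumR_nonneg L gap (fun t Ht => proj1 (Hgap t Ht))).
  split; [lra|].
  intros Heq t Ht. apply (Hgap t Ht).
  apply (sumR_nonneg_eq0 L gap (fun t Ht => proj1 (Hgap t Ht))); [lra | exact Ht].
Qed.

End Majorization.

Definition ge_on (p : nat -> R) (a b : nat) : Prop := p b <= p a.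

Fixpoint insert_desc (p : nat -> R) (a : nat) (l : list nat) : list nat :=
  match l with
  | nil => a :: nil
  | b :: l' => if Rle_dec (p b) (p a) then a :: l else b :: insert_desc p a l'
  end.

Fixpoint sort_desc (p : nat -> R) (l : list nat) : list nat :=
  match l with nil => nil | a :: l' => insert_desc p a (sort_desc p l') end.

Lemma insert_desc_perm p a l : Permutation (insert_desc p a l) (a :: l).
Proof.
  induction l as [|b l IH]; simpl; [auto|]. destruct Rle_dec; [auto|].
  eapply perm_trans; [apply perm_skip, IH| apply perm_swap].
Qed.

Lemma sort_desc_perm p l : Permutation (sort_desc p l) l.
Proof. induction l; simpl; [auto|]. eapply perm_trans; [apply insert_desc_perm| auto]. Qed.

Lemma insert_desc_HdRel p a b l :
  HdRel (ge_on p) b l -> ge_on p b a -> HdRel (ge_on p) b (insert_desc p a l).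
Proof.
  intros H Hba. destruct l; simpl; [constructor; auto|].
  destruct Rle_dec; constructor; auto. inversion H; auto.
Qed.

Lemma insert_desc_sorted p a l : Sorted (ge_on p) l -> Sorted (ge_on p) (insert_desc p a l).
Proof.
  induction l as [|b l IH]; intros H; simpl; [constructor; auto|].
  destruct Rle_dec as [Hle|Hnle].
  - constructor; [auto| constructor; auto].
  - apply Sorted_inv in H as [H1 H2]. constructor; auto.
    apply insert_desc_HdRel; auto. unfold ge_on; lra.
Qed.

Lemma sort_desc_sorted p l : Sorted (ge_on p) (sort_desc p l).
Proof. induction l; simpl; [constructor|]. apply insert_desc_sorted; auto. Qed.

Lemma Sorted_ge_on_nth p l d t : Sorted (ge_on p) l -> (S t < length l)%nat ->
  p (nth (S t) l d) <= p (nth t l d).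
Proof.
  revert t; induction l as [|a l IH]; intros t H Ht; simpl in Ht; [lia|].
  apply Sorted_inv in H as [H1 H2].
  destruct l as [|b l]; simpl in Ht; [lia|].
  destruct t; [inversion H2; auto|]. apply IH; auto. simpl; lia.
Qed.

Lemma map_nth_seq_firstn (l : list nat) k d : (k <= length l)%nat ->
  map (fun t => nth t l d) (seq 0 k) = firstn k l.
Proof.
  revert k; induction l as [|a l IH]; intros k Hk.
  - simpl in Hk. replace k with 0%nat by lia. reflexivity.
  - destruct k; [reflexivity|]. simpl in Hk |- *.
    f_equal. rewrite <- seq_shift, map_map. apply IH. lia.
Qed.

Lemma sumR_nth (l : list nat) k f : (k <= length l)%nat ->
  sumR k (fun t => f (nth t l 0%nat)) = lsum (map f (firstn k l)).
Proof.
  intros Hk. unfold sumR. rewrite <- (map_map (fun t => nth t l 0%nat) f), map_nth_seq_firstn by lia.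
  reflexivity.
Qed.

Lemma sumR_nth_perm (l : list nat) n f : Permutation l (seq 0 n) ->
  sumR n (fun t => f (nth t l 0%nat)) = sumR n f.
Proof.
  intros H. assert (Hl : length l = n) by (rewrite (Permutation_length H), length_seq; auto).
  rewrite sumR_nth, <- Hl, firstn_all by lia.
  apply lsum_perm, Permutation_map. rewrite Hl; auto.
Qed.

Lemma decreasing_rearrangement (p : nat -> R) n :
  exists l, Permutation l (seq 0 n) /\
    forall t, (S t < n)%nat -> p (nth (S t) l 0%nat) <= p (nth t l 0%nat).
Proof.
  exists (sort_desc p (seq 0 n)). split; [apply sort_desc_perm|].
  intros t Ht. apply Sorted_ge_on_nth; [apply sort_desc_sorted|].
  rewrite (Permutation_length (sort_desc_perm p _)), length_seq. auto.
Qed.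

Lemma entropy_eq_xlnx L q : entropy L q = - (/ ln 2 * sumR L (fun j => q j * ln (q j))).
Proof.
  unfold entropy. f_equal. rewrite <- sumR_mult_l. apply sumR_ext. intros j _.
  unfold plog2, log2. destruct Req_EM_T as [->|_]; [ring| unfold Rdiv; ring].
Qed.

Lemma inP_in_convP L n p : inP L n p -> in_convP L n p.
Proof.
  intros Hp. exists 1%nat, (fun _ => 1), (fun _ => p). split; [|split].
  - intros k _. split; [lra| auto].
  - unfold sumR; simpl; ring.
  - intros j _. unfold sumR; simpl; ring.
Qed.

Section Clumpy.
Variables (L : nat) (n : nat -> nat).
Hypotheses (hL : (1 <= L)%nat) (hn : forall i, (i < L)%nat -> (1 <= n i <= L)%nat).

Lemma Msum_pos : 0 < Msum L n.
Proof.
  assert (sumR L (fun _ => 1) <= Msum L n).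
  { apply sumR_le. intros j Hj. pose proof (hn j Hj). apply (le_INR 1). lia. }
  rewrite sumR_lsum, lsum_map_const, length_seq in H.
  apply (le_INR 1) in hL. simpl in hL. lra.
Qed.

Lemma sumR_pstar k : sumR k (pstar L n) = / Msum L n * sumR L (fun i => INR (Nat.min (n i) k)).
Proof.
  unfold pstar. rewrite sumR_mult_l, <- sumR_comm. f_equal.
  apply sumR_ext. intros; apply sumR_indicator_lt.
Qed.

Lemma pstar_pmf : is_pmf L (pstar L n).
Proof.
  pose proof Msum_pos. split.
  - intros j Hj. unfold pstar. apply Rmult_le_pos; [left; apply Rinv_0_lt_compat; auto|].
    apply sumR_nonneg. intros; destruct Nat.ltb; lra.
  - rewrite sumR_pstar, (sumR_ext _ _ (fun i => INR (n i))).
    + fold (Msum L n). field. lra.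
    + intros j Hj. pose proof (hn j Hj). f_equal. lia.
Qed.

Lemma pstar_inP : inP L n (pstar L n).
Proof.
  exists (fun i j => if Nat.ltb j (n i) then 1 else 0). split; [|split].
  - intros i j _ _. destruct Nat.ltb; auto.
  - intros i Hi. rewrite sumR_indicator_lt. pose proof (hn i Hi). f_equal. lia.
  - intros j Hj. reflexivity.
Qed.

Definition majorized_by_pstar (p : nat -> R) : Prop :=
  (forall j, (j < L)%nat -> 0 <= p j) /\ sumR L p = 1 /\
  (forall s, NoDup s -> (forall j, In j s -> (j < L)%nat) ->
     lsum (map p s) <= sumR (length s) (pstar L n)).

Lemma inP_majorized p : inP L n p -> majorized_by_pstar p.
Proof.
  intros [E [HE01 [HErow Hp]]]. pose proof Msum_pos.
  assert (HE : forall i j, (i < L)%nat -> (j < L)%nat -> 0 <= E i j <= 1)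
    by (intros i j Hi Hj; destruct (HE01 i j Hi Hj) as [-> | ->]; lra).
  assert (0 < / Msum L n) by (apply Rinv_0_lt_compat; auto).
  split; [|split].
  - intros j Hj. rewrite Hp by auto. apply Rmult_le_pos; [lra|].
    apply sumR_nonneg. intros i Hi; apply HE; auto.
  - rewrite (sumR_ext _ _ (fun j => / Msum L n * sumR L (fun i => E i j))) by auto.
    rewrite sumR_mult_l, <- sumR_comm, (sumR_ext _ _ (fun i => INR (n i))) by auto.
    fold (Msum L n). field. lra.
  - intros s Hnd Hs.
    rewrite (lsum_map_ext _ _ (fun j => / Msum L n * sumR L (fun i => E i j)))
      by (intros j Hj; apply Hp, Hs; auto).
    rewrite lsum_map_mult_l, sumR_pstar. apply Rmult_le_compat_l; [lra|].
    apply Rle_trans with (sumR L (fun i => lsum (map (E i) s)));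
      [right; exact (lsum_map_comm s (seq 0 L) (fun j i => E i j))|].
    apply sumR_le. intros i Hi.
    assert (lsum (map (E i) s) <= INR (n i)).
    { rewrite <- HErow by auto. apply lsum_map_le_sumR; auto. intros j Hj; apply HE; auto. }
    assert (lsum (map (E i) s) <= INR (length s)).
    { rewrite <- (Rmult_1_r (INR (length s))), <- lsum_map_const.
      apply lsum_map_le. intros j Hj; apply HE; auto. }
    destruct (Nat.min_spec (n i) (length s)) as [[_ ->]|[_ ->]]; auto.
Qed.

Lemma in_convP_majorized p : in_convP L n p -> majorized_by_pstar p.
Proof.
  intros [K [w [q [Hq [Hw Hp]]]]].
  assert (Hqmaj : forall k, (k < K)%nat -> 0 <= w k /\ majorized_by_pstar (q k))
    by (intros k Hk; destruct (Hq k Hk); split; auto; apply inP_majorized; auto).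
  split; [|split].
  - intros j Hj. rewrite Hp by auto. apply sumR_nonneg. intros k Hk.
    destruct (Hqmaj k Hk) as [? [? _]]. apply Rmult_le_pos; auto.
  - rewrite (sumR_ext _ _ (fun j => sumR K (fun k => w k * q k j))), <- sumR_comm, <- Hw by auto.
    apply sumR_ext. intros k Hk.
    rewrite sumR_mult_l. destruct (Hqmaj k Hk) as [_ [_ [-> _]]]. ring.
  - intros s Hnd Hs.
    rewrite (lsum_map_ext _ _ (fun j => sumR K (fun k => w k * q k j)))
      by (intros j Hj; apply Hp, Hs; auto).
    apply Rle_trans with (sumR K (fun k => lsum (map (fun j => w k * q k j) s)));
      [right; exact (lsum_map_comm s (seq 0 K) (fun j k => w k * q k j))|].
    apply Rle_trans with (sumR K (fun k => w k * sumR (length s) (pstar L n))).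
    + apply sumR_le. intros k Hk. rewrite lsum_map_mult_l.
      destruct (Hqmaj k Hk) as [? [_ [_ ?]]]. apply Rmult_le_compat_l; auto.
    + rewrite (sumR_ext _ _ (fun k => sumR (length s) (pstar L n) * w k)) by (intros; ring).
      rewrite sumR_mult_l, Hw. lra.
Qed.

Lemma majorized_entropy p : majorized_by_pstar p ->
  entropy L (pstar L n) <= entropy L p /\
  (entropy L p = entropy L (pstar L n) ->
   Permutation (map p (seq 0 L)) (map (pstar L n) (seq 0 L))).
Proof.
  intros [Hp0 [Hp1 Hpmaj]].
  destruct (decreasing_rearrangement p L) as [l [Hperm Hdesc]].
  assert (Hlen : length l = L) by (rewrite (Permutation_length Hperm), length_seq; auto).
  assert (Hl : forall j, In j l -> (j < L)%nat)
    by (intros j Hj; apply (Permutation_in _ Hperm), in_seq in Hj; lia).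
  set (x := fun t => p (nth t l 0%nat)).
  assert (Hxmaj : forall k, (k <= L)%nat -> sumR k x <= sumR k (pstar L n)).
  { intros k Hk. unfold x. rewrite sumR_nth by lia.
    rewrite <- (firstn_length_le l (n := k)) at 2 by lia.
    pose proof (Permutation_NoDup (Permutation_sym Hperm) (seq_NoDup L 0)) as Hnd.
    pose proof Hl as Hl'. rewrite <- (firstn_skipn k l) in Hnd, Hl'.
    apply Hpmaj; [eapply NoDup_app_remove_r, Hnd|].
    intros j Hj. apply Hl', in_or_app; auto. }
  assert (Hx0 : forall t, (t < L)%nat -> 0 <= x t)
    by (intros t Ht; apply Hp0, Hl, nth_In; lia).
  assert (Hx1 : sumR L x = 1) by (unfold x; rewrite sumR_nth_perm; auto).
  destruct pstar_pmf as [Hy0 Hy1].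
  destruct (majorized_sum_xlnx L x (pstar L n) Hx0 Hy0 Hdesc Hx1 Hy1 Hxmaj) as [Hle Heq].
  unfold x in Hle, Heq. rewrite (sumR_nth_perm l L (fun j => p j * ln (p j)) Hperm) in Hle, Heq.
  rewrite !entropy_eq_xlnx. pose proof ln_lt_2.
  assert (0 < / ln 2) by (apply Rinv_0_lt_compat; lra).
  split; [apply Ropp_le_contravar, Rmult_le_compat_l; lra|].
  intros Hent. assert (Hx : forall t, (t < L)%nat -> p (nth t l 0%nat) = pstar L n t).
  { apply Heq, Rmult_eq_reg_l with (/ ln 2); lra. }
  apply perm_trans with (map p l); [apply Permutation_map, Permutation_sym; auto|].
  rewrite <- (firstn_all l), <- map_nth_seq_firstn with (d := 0%nat), map_map, Hlen by lia.
  apply Permutation_refl', map_ext_in. intros t Ht. apply in_seq in Ht. apply Hx. lia.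
Qed.

End Clumpy.

Theorem theorem1 (L : nat) (n : nat -> nat)
  (hL : (1 <= L)%nat)
  (hn : forall i, (i < L)%nat -> (1 <= n i <= L)%nat) :
  is_pmf L (pstar L n) /\
  (inP L n (pstar L n) /\
   (forall p, inP L n p -> entropy L (pstar L n) <= entropy L p)) /\
  (in_convP L n (pstar L n) /\
   (forall p, in_convP L n p -> entropy L (pstar L n) <= entropy L p)) /\
  (forall p, in_convP L n p -> entropy L p = entropy L (pstar L n) ->
     Permutation (map p (seq 0 L)) (map (pstar L n) (seq 0 L))).
Proof.
  pose proof (pstar_inP L n hL hn) as Hstar.
  assert (Hconv : forall p, in_convP L n p ->
            entropy L (pstar L n) <= entropy L p /\
            (entropy L p = entropy L (pstar L n) ->
             Permutation (map p (seq 0 L)) (map (pstar L n) (seq 0 L))))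
    by (intros p Hp; apply majorized_entropy, in_convP_majorized; auto).
  split; [apply pstar_pmf; auto|].
  split; [split; [exact Hstar|]|split; [split; [apply inP_in_convP, Hstar|]|]].
  - intros p Hp. apply Hconv, inP_in_convP, Hp.
  - intros p Hp. apply Hconv, Hp.
  - intros p Hp. apply Hconv, Hp.
Qed.
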